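(* Let $B$ be a bipartite caching graph (with left vertex set the users and right vertex set the $F$ subfile indices) defining a caching scheme on a broadcast network whose server holds $N$ files. Let $N'\le N$ and let $U=\{k_j:j\in[N']\}$ be any set of $N'$ distinct user vertices of $B$. For $j\in[N']$ let $\rho_j$ be the number of right vertices of $B$ adjacent to every vertex of $\{k_i:i\in[j]\}$. If $\tilde R^*$ denotes the infimum of all achievable rates for the caching scheme defined by $B$, then $$\tilde R^*F\ge\sum_{j=1}^{N'}\rho_j.$$
   Context: Coded caching setup: a server holds $N$ files $W_1,\dots,W_N$, each consisting of $F$ subfiles $W_{i,f}$ ($f\in\mathcal{F}$, $|\mathcal{F}|=F$); all subfiles are independent and uniformly distributed over a finite abelian group $\mathcal{A}$, and entropies are measured with logarithm base $|\mathcal{A}|$, so each subfile has entropy $1$. The server is connected to the users by an error-free broadcast link. A bipartite caching graph is a bipartite graph with the users as left vertices, the subfile indices $\mathcal{F}$ as right vertices, and all left vertices of the same degree; it defines the symmetric caching scheme in which user $k$ caches $W_{i,f}$ for all $i\in[N]$ if $\{k,f\}$ is not an edge, and caches no $W_{i,f}$ if $\{k,f\}$ is an edge. Given this caching, a rate $R$ is achievable if there is a (possibly nonlinear) delivery scheme which, for every demand vector (each user demanding one file), broadcasts a message of total size $RF$ (in subfile units, i.e. entropy at most $RF$) from which every user recovers its demanded file using its cache contents. *)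

From mathcomp Require Import all_boot all_order all_algebra.
From mathcomp Require Import all_classical all_reals all_analysis.
Set Implicit Arguments. Unset Strict Implicit. Unset Printing Implicit Defensive.
Import Order.TTheory GRing.Theory Num.Theory.
Local Open Scope ring_scope.
Local Open Scope classical_set_scope.

(* Users are 'I_K, subfile indices are 'I_F, files are 'I_N.
   A realization of the library is w : files_val N F A, w (i,f) = W_{i,f}. *)
Definition files_val (N F : nat) (A : finZmodType) :=
  {ffun 'I_N * 'I_F -> A}.

Definition caching_graph (K F : nat) (E : 'I_K -> 'I_F -> bool) : Prop :=
  forall k k' : 'I_K, #|[set f | E k f]| = #|[set f | E k' f]|.

(* Cache contents of user k: W_{i,f} for all i when {k,f} is not an edge;
   non-cached positions are blanked to 0 (their location is known). *)
Definition cache (K N F : nat) (A : finZmodType) (E : 'I_K -> 'I_F -> bool)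
  (k : 'I_K) (w : files_val N F A) : files_val N F A :=
  [ffun p : 'I_N * 'I_F => if E k p.2 then 0 else w p].

Definition file (N F : nat) (A : finZmodType) (w : files_val N F A) (i : 'I_N)
  : {ffun 'I_F -> A} := [ffun f => w (i, f)].

(* Entropy (base |A|) of the random variable X(W), W uniform on
   files_val N F A (i.e. all subfiles independent and uniform over A). *)
Definition entropy (R : realType) (N F : nat) (A : finZmodType)
  (X : files_val N F A -> nat) : R :=
  let p := fun m : nat =>
    (#|[set w : files_val N F A | X w == m]|%:R / #|{: files_val N F A}|%:R : R) in
  \sum_(m <- undup [seq X w | w <- enum {: files_val N F A}])
     (- (p m * ln (p m)) / ln (#|{: A}|%:R)).

(* r is achievable for the caching scheme defined by E: for every demand
   vector d there is a (possibly nonlinear) broadcast message X (a function of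
   all files) of entropy at most r*F, from which every user k decodes W_{d k}
   using its cache. *)
Definition achievable (R : realType) (K N F : nat) (A : finZmodType)
  (E : 'I_K -> 'I_F -> bool) (r : R) : Prop :=
  forall d : {ffun 'I_K -> 'I_N},
    exists X : files_val N F A -> nat,
      entropy R X <= r * F%:R /\
      exists dec : 'I_K -> nat -> files_val N F A -> {ffun 'I_F -> A},
        forall (k : 'I_K) (w : files_val N F A),
          dec k (X w) (cache E k w) = file w (d k).

Definition opt_rate (R : realType) (K N F : nat) (A : finZmodType)
  (E : 'I_K -> 'I_F -> bool) : R :=
  inf [set r : R | @achievable R K N F A E r].

(* rho_j (0-indexed j) = number of right vertices adjacent to all of
   k_0, ..., k_j. *)
Definition rho (K F N' : nat) (E : 'I_K -> 'I_F -> bool) (u : 'I_N' -> 'I_K)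
  (j : 'I_N') : nat :=
  #|[set f : 'I_F | [forall i : 'I_N', (i <= j)%N ==> E (u i) f]]|.

(* Let user k_j demand file j and call the subfile W_{i,f} (i < N')
   uncached if f is adjacent to all of k_0, ..., k_i; there are
   rho_0 + ... + rho_(N'-1) of them.  An uncached W_{i,f} with j <= i is not in
   the cache of k_j, so the cache of k_j is determined by the subfiles that
   are not uncached together with W_0, ..., W_(j-1).  By induction on j, the
   message and the subfiles that are not uncached therefore determine all of
   W_0, ..., W_(N'-1), hence the whole library.  So every value of the
   message has probability at most |A|^-(rho_0 + ... + rho_(N'-1)), and the
   entropy of the message is at least that many subfiles. *)

From mathcomp Require Import all_boot all_order all_algebra.
From mathcomp Require Import all_classical all_reals all_analysis.
From mathcomp Require Import lra.
Set Implicit Arguments.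
Unset Strict Implicit.
Unset Printing Implicit Defensive.
Import Order.TTheory GRing.Theory Num.Theory.
Local Open Scope ring_scope.

Lemma sum_count_mem_undup (T : eqType) (s : seq T) :
  (\sum_(x <- undup s) count_mem x s)%N = size s.
Proof.
rewrite -(perm_size (perm_count_undup s)) size_flatten sumnE !big_map.
by apply: eq_bigr => x _; rewrite size_nseq.
Qed.

Lemma sum_card_fibres (T : finType) (X : T -> nat) :
  (\sum_(m <- undup [seq X w | w <- enum T]) #|[set w | X w == m]|)%N = #|T|.
Proof.
rewrite cardT -(size_map X) -sum_count_mem_undup.
apply: eq_bigr => m _; rewrite count_map -size_filter cardE.
apply/perm_size/uniq_perm; rewrite ?filter_uniq -?enumT ?enum_uniq // => w.
by rewrite mem_enum mem_filter inE mem_enum andbT eq_sym.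
Qed.

Lemma card_mul_exp_le_of_eq_off (aT rT : finType) (D : {set aT})
    (P : {set {ffun aT -> rT}}) :
  (forall w w' : {ffun aT -> rT},
     w \in P -> w' \in P -> {in ~: D, w =1 w'} -> w = w') ->
  (#|P| * #|rT| ^ #|D| <= #|{ffun aT -> rT}|)%N.
Proof.
move=> eq_off.
pose res (w : {ffun aT -> rT}) : {ffun {x | x \in ~: D} -> rT} :=
  [ffun x => w (val x)].
have res_inj : {in P &, injective res}.
  move=> w w' Pw Pw' /ffunP eq_res; apply: eq_off => // x xD.
  by have := eq_res (exist _ x xD); rewrite !ffunE.
rewrite -(card_in_imset res_inj) card_ffun -(cardsC D) expnD mulnC.
rewrite leq_mul2l (leq_trans (max_card _)) ?orbT //.
by rewrite card_ffun card_sig cardsE.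
Qed.

Lemma card_classical_set (T : finType) (P : pred T) :
  #|[set x | P x]%classic| = #|[set x | P x]|.
Proof. by apply: eq_card => x; rewrite inE /in_mem /= /in_set asboolb. Qed.

Lemma le_neg_xlogx (R : realType) (a p : R) (S : nat) :
  1 < a -> 0 <= p -> p * a ^+ S <= 1 -> p * S%:R <= - (p * ln p) / ln a.
Proof.
move=> a_gt1 p_ge0 pa_le1.
have ln_a_gt0 : 0 < ln a by apply: ln_gt0.
have [->|p_neq0] := eqVneq p 0; first by rewrite !mul0r oppr0 mul0r.
have p_gt0 : 0 < p by rewrite lt_def p_neq0.
have a_gt0 : 0 < a by apply: lt_trans a_gt1.
have : ln (p * a ^+ S) <= 0 by apply: ln_le0.
rewrite lnM ?posrE ?exprn_gt0 // lnXn // => ln_le0.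
rewrite ler_pdivlMr // -mulrA -mulrN ler_wpM2l // mulr_natl.
lra.
Qed.

Lemma entropy_ge_of_small_fibres (R : realType) (N F : nat) (A : finZmodType)
    (X : files_val N F A -> nat) (S : nat) :
  (1 < #|{: A}|)%N ->
  (forall m, #|[set w | X w == m]| * #|{: A}| ^ S
      <= #|{: files_val N F A}|)%N ->
  S%:R <= entropy R X.
Proof.
move=> A_gt1 small_fibres.
set T := #|{: files_val N F A}|.
have T_gt0 : (0 : R) < T%:R.
  by rewrite ltr0n /T card_ffun expn_gt0 (ltn_trans _ A_gt1).
pose p m : R := #|[set w : files_val N F A | X w == m]|%:R / T%:R.
have sum_p : \sum_(m <- undup [seq X w | w <- enum {: files_val N F A}]) p m = 1.
  by rewrite -mulr_suml -natr_sum sum_card_fibres divff // gt_eqF.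
rewrite /entropy -[S%:R]mul1r -{1}sum_p mulr_suml; apply: ler_sum => m _.
rewrite card_classical_set; apply: le_neg_xlogx; first by rewrite ltr1n.
  by rewrite divr_ge0.
by rewrite -natrX mulrAC ler_pdivrMr // mul1r -natrM ler_nat.
Qed.

Section Decoding.

Variables (K N F N' : nat) (A : finZmodType).
Variables (E : 'I_K -> 'I_F -> bool) (u : 'I_N' -> 'I_K) (le_N'N : (N' <= N)%N).

Local Notation widen := (widen_ord le_N'N).

Definition uncached_positions : {set 'I_N * 'I_F} :=
  [set (widen p.1, p.2) | p in
     [set p : 'I_N' * 'I_F | [forall i : 'I_N', (i <= p.1)%N ==> E (u i) p.2]]].

Lemma card_uncached_positions :
  #|uncached_positions| = (\sum_(j < N') rho E u j)%N.
Proof.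
rewrite card_imset; last by move=> [i f] [i' f'] [/val_inj -> ->].
rewrite -sum1dep_card.
under [RHS]eq_bigr do rewrite /rho card_classical_set -sum1dep_card.
by rewrite pair_big_dep.
Qed.

Lemma cache_eq_of_uncached (w w' : files_val N F A) (j : 'I_N') :
  {in ~: uncached_positions, w =1 w'} ->
  (forall i : 'I_N', (i < j)%N -> file w (widen i) = file w' (widen i)) ->
  cache E (u j) w = cache E (u j) w'.
Proof.
move=> eq_off eq_before; apply/ffunP => -[i f]; rewrite !ffunE /=.
have [|cached] := boolP ((i, f) \in uncached_positions); last first.
  by case: ifP => // _; apply: eq_off; rewrite inE.
case/imsetP=> -[i' f'] /[!inE] /= /forallP adj [-> ->] /=.
case: ifP => // not_adj.
have lt_i'j : (i' < j)%N.
  by rewrite ltnNge; apply: contraFN not_adj; apply/implyP/adj.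
by have /ffunP/(_ f') := eq_before i' lt_i'j; rewrite !ffunE.
Qed.

Variables (d : {ffun 'I_K -> 'I_N}) (d_u : forall j, d (u j) = widen j).
Variables (X : files_val N F A -> nat)
  (dec : 'I_K -> nat -> files_val N F A -> {ffun 'I_F -> A}).
Hypothesis dec_ok : forall k w, dec k (X w) (cache E k w) = file w (d k).

Lemma eq_of_message_eq (w w' : files_val N F A) :
  X w = X w' -> {in ~: uncached_positions, w =1 w'} -> w = w'.
Proof.
move=> eqX eq_off.
have eq_files n (j : 'I_N') : (j < n)%N -> file w (widen j) = file w' (widen j).
  elim: n j => [//|n IH] j; rewrite ltnS leq_eqVlt => /predU1P[jn|]; last exact: IH.
  rewrite -d_u -!dec_ok eqX (cache_eq_of_uncached eq_off) // => i.
  by rewrite jn; apply: IH.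
apply/ffunP => -[i f]; have [|cached] := boolP ((i, f) \in uncached_positions).
  case/imsetP=> -[j f'] _ [-> ->].
  by have /ffunP/(_ f') := eq_files _ j (ltn_ord j); rewrite !ffunE.
by apply: eq_off; rewrite inE.
Qed.

Lemma entropy_ge_sum_rho (R : realType) :
  (1 < #|{: A}|)%N -> (\sum_(j < N') rho E u j)%:R <= entropy R X.
Proof.
move=> A_gt1; rewrite -card_uncached_positions.
apply: entropy_ge_of_small_fibres => // m; apply: card_mul_exp_le_of_eq_off => w w'.
by rewrite !inE => /eqP <- /eqP /esym; apply: eq_of_message_eq.
Qed.

End Decoding.

Lemma exists_demand_of_inj (K N N' : nat) (u : 'I_N' -> 'I_K)
    (le_N'N : (N' <= N)%N) :
  injective u -> {ffun 'I_K -> 'I_N} ->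
  exists d : {ffun 'I_K -> 'I_N}, forall j, d (u j) = widen_ord le_N'N j.
Proof.
move=> inj_u d0.
exists [ffun k => if [pick j | u j == k] is Some j then widen_ord le_N'N j
                  else d0 k] => j.
rewrite ffunE; case: pickP => [j' /eqP /inj_u -> //|].
by move=> /(_ j); rewrite eqxx.
Qed.

Section OptimalRate.

Variables (R : realType) (K N F : nat) (A : finZmodType).
Variable (E : 'I_K -> 'I_F -> bool).

Lemma achievable_pickle :
  (0 < F)%N ->
  achievable N A E (entropy R (fun w : files_val N F A => pickle w) / F%:R).
Proof.
move=> F_gt0 d; exists (fun w => pickle w); split.
  by rewrite divfK // pnatr_eq0 -lt0n.
by exists (fun k m c => file (odflt c (unpickle m)) (d k)) => k w; rewrite pickleK.
Qed.

(* With no demand vector every rate is vacuously achievable, and [inf] of a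
   set without lower bound is [0]. *)
Lemma opt_rate_no_demand :
  ~ inhabited {ffun 'I_K -> 'I_N} -> opt_rate R N A E = 0.
Proof.
move=> no_demand; rewrite /opt_rate inf_out // => -[_ [x lb_x]].
have : x <= x - 1 by apply: lb_x => d; case: no_demand.
by rewrite lerBrDl addrC -lerBrDl subrr ler10.
Qed.

Lemma ler_opt_rate (S : R) :
  (0 < F)%N -> (forall r, achievable N A E r -> S <= r * F%:R) ->
  S <= opt_rate R N A E * F%:R.
Proof.
move=> F_gt0 lb_S; rewrite -ler_pdivrMr ?ltr0n //.
apply: lb_le_inf => [|r /lb_S]; first by eexists; exact: achievable_pickle.
by rewrite ler_pdivrMr ?ltr0n.
Qed.

End OptimalRate.

Theorem theorem8 (R : realType) (K N F : nat) (A : finZmodType)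
  (E : 'I_K -> 'I_F -> bool) (N' : nat) (u : 'I_N' -> 'I_K) :
  (1 < #|{: A}|)%N ->
  caching_graph E ->
  (N' <= N)%N ->
  injective u ->
  (\sum_(j < N') rho E u j)%:R <= @opt_rate R K N F A E * F%:R.
Proof.
move=> A_gt1 _ le_N'N inj_u.
have [F0|F_gt0] := posnP F.
  rewrite [in F%:R]F0 mulr0 big1 // => j _.
  rewrite /rho card_classical_set; apply: eq_card0 => f.
  by have : (f < 0)%N by rewrite -F0.
have [[d0]|no_demand] := pselect (inhabited {ffun 'I_K -> 'I_N}).
  have [d d_u] := exists_demand_of_inj le_N'N inj_u d0.
  apply: ler_opt_rate => // r /(_ d) [X [HX [dec dec_ok]]].
  exact: le_trans (entropy_ge_sum_rho d_u dec_ok _ A_gt1) HX.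
rewrite opt_rate_no_demand // mul0r big1 // => j _.
by case: no_demand; constructor; exact: [ffun=> widen_ord le_N'N j].
Qed.
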